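(* Let $1\le p\le\infty$ and $1\le q<\infty$. The function $f:[0,1]\to\mathbb{R}$, $f(x)=x$, belongs to $\mathcal{H}_{1,p}$, but not to $\mathcal{H}_{\mathrm{wav},\alpha,p,q}$ for any $\alpha\ge1$. Thus $\mathcal{H}_{1,p}$ is not included in $\mathcal{H}_{\mathrm{wav},\alpha,p,q}$ for any $\alpha\ge1$.
   Context: $\mathcal{H}_{1,p}$ is the space of functions $f:[0,1]\to\mathbb{R}$ of the form $f(x)=c+\int_0^x\tilde f(t)\,dt$ with $c\in\mathbb{R}$ and $\tilde f\in L_p([0,1])$. Haar wavelet space for a fixed integer base $b\ge2$: $\Delta_{-1}=\{0\}$, $\Delta_j=\{0,\dots,b^j-1\}$ ($j\in\mathbb{N}_0$), $\nabla_0=\{0\}$, $\nabla_j=\{0,\dots,b-1\}$ ($j\ge1$); $\psi^0_{0,0}=1_{[0,1)}$ and for $j\ge1$, $i\in\nabla_j$, $k\in\Delta_{j-1}$: $\psi^j_{i,k}(x)=b^{j/2-1}(b\,1_{[b^{-j}(bk+i),b^{-j}(bk+i+1))}(x)-1_{[b^{1-j}k,b^{1-j}(k+1))}(x))$. For $q<\infty$, $\mathcal{H}_{\mathrm{wav},\alpha,p,q}$ is the space of $f\in L_1([0,1])$ with $\sum_{j=0}^\infty b^{q(\alpha-1/p+1/2)j}\big(\sum_{k\in\Delta_{j-1}}\sum_{i\in\nabla_j}|\int_0^1f\psi^j_{i,k}|^p\big)^{q/p}<\infty$ (inner $\ell_p$-sum replaced by a maximum if $p=\infty$). *)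

From HB Require Import structures.
From mathcomp Require Import all_boot all_order all_algebra.
From mathcomp Require Import all_classical all_reals all_analysis.
Set Implicit Arguments. Unset Strict Implicit. Unset Printing Implicit Defensive.
Import Order.TTheory GRing.Theory Num.Theory.
Local Open Scope classical_set_scope.
Local Open Scope ring_scope.

Section Defs.
Variable R : realType.
Notation mu := (@lebesgue_measure R).
Definition I01 : set R := `[0%R, 1%R].

(* g belongs to L_p([0,1]) for p in [1, +oo] (p : \bar R): measurable on [0,1]
   and finite L_p norm (g extended by 0 outside [0,1]; for p = +oo this
   is the essential supremum of |g| on [0,1]). *)
Definition inLp01 (p : \bar R) (g : R -> R) : Prop :=
  measurable_fun I01 g /\
  (Lnorm mu p (fun x => (if x \in I01 then g x else 0)%:E) < +oo)%E.

Definition H1p (p : \bar R) (f : R -> R) : Prop :=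
  exists (c : R) (g : R -> R), inLp01 p g /\
    forall x, x \in I01 -> f x = c + Rintegral mu (`[0%R, x] : set R) g.

Definition ind (a b x : R) : R := if (a <= x) && (x < b) then 1 else 0.

Definition haar (b j i k : nat) (x : R) : R :=
  if j is 0%N then ind 0 1 x else
  let B : R := b%:R in
  B `^ ((j%:R / 2) - 1) *
    (B * ind (B `^ (- j%:R) * (B * k%:R + i%:R))
             (B `^ (- j%:R) * (B * k%:R + i%:R + 1)) x
     - ind (B `^ (1 - j%:R) * k%:R) (B `^ (1 - j%:R) * (k%:R + 1)) x).

Definition nDelta (b j : nat) : nat := if j is j'.+1 then (b ^ j')%N else 1%N.
Definition nNabla (b j : nat) : nat := if j is 0%N then 1%N else b.

Definition wcoef (b j i k : nat) (f : R -> R) : R :=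
  Rintegral mu I01 (fun x => f x * haar b j i k x).

Definition invp (p : \bar R) : R := if p is r%:E then r^-1 else 0.

Definition level_term (b : nat) (p : \bar R) (q : R) (f : R -> R) (j : nat) : R :=
  match p with
  | r%:E => (\sum_(k < nDelta b j) \sum_(i < nNabla b j)
               `|wcoef b j i k f| `^ r) `^ (q / r)
  | _ => (\big[Num.max/0]_(k < nDelta b j) \big[Num.max/0]_(i < nNabla b j)
               `|wcoef b j i k f|) `^ q
  end.

Definition Hwav (b : nat) (alpha : R) (p : \bar R) (q : R) (f : R -> R) : Prop :=
  mu.-integrable I01 (EFin \o f) /\
  (\sum_(0 <= j <oo)
     ((b%:R `^ (q * (alpha - invp p + 2^-1) * j%:R)) * level_term b p q f j)%:E
   < +oo)%E.

End Defs.

From HB Require Import structures.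
From mathcomp Require Import all_boot all_order all_algebra.
From mathcomp Require Import all_classical all_reals all_analysis.
From mathcomp Require Import ring measurable_realfun.
Import Order.TTheory GRing.Theory Num.Theory.
Import numFieldNormedType.Exports.
Set Implicit Arguments. Unset Strict Implicit. Unset Printing Implicit Defensive.
Local Open Scope classical_set_scope.
Local Open Scope ring_scope.

(* The identity is the primitive of the constant 1, hence lies in H_{1,p}.
   Against the Haar wavelet psi^{j+1}_{0,k}, k < b^j, it has the coefficient
   -(b-1)/2 * b^(-3(j+1)/2), independently of k.  So the level-(j+1) term of
   the wavelet norm is at least ((b-1)/2)^q b^(-q/p) b^(q(alpha-1)(j+1)), which
   stays away from 0 when alpha >= 1, and the series diverges. *)

Local Notation mu := (@lebesgue_measure _).

Lemma indE (R : realType) (a c x : R) : ind a c x = \1_(`[a, c[ : set R) x.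
Proof.
rewrite /ind indicE; case: ifPn => h.
  by rewrite mem_set //= in_itv /= h.
by rewrite memNset //= in_itv /= (negbTE h).
Qed.

Section integral_id_indicator.
Variable R : realType.

Lemma integral_id_itv (a c : R) : a < c ->
  (\int[mu]_(x in `[a, c]) x%:E = ((c ^+ 2 - a ^+ 2) / 2)%:E)%E.
Proof.
move=> ac; pose F (y : R) := y ^+ 2 / 2.
have dF (x : R) : is_derive x 1 F x.
  by apply: is_derive_eq; rewrite /GRing.scale /=; field.
have cF (x : R) : F y @[y --> x] --> F x.
  by apply/differentiable_continuous/derivable1_diffP; exact: ex_derive.
rewrite (@continuous_FTC2 _ id F) //.
- by rewrite -EFinB mulrBl.
- by apply: continuous_subspaceT => x; exact: cvg_id.
- split; [by move=> x _; exact: ex_derive|exact: cvg_at_right_filter|exact: cvg_at_left_filter].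
- by move=> x _; rewrite derive1E derive_val.
Qed.

Lemma integrable_id_itv (a c : R) : mu.-integrable `[a, c] (EFin \o id).
Proof.
apply: continuous_compact_integrable; first exact: segment_compact.
by apply: continuous_subspaceT => x; exact: cvg_id.
Qed.

Lemma integrable_id_ind (a c : R) :
  mu.-integrable (@I01 R) (EFin \o (fun x => x * ind a c x)).
Proof.
apply: (@le_integrable _ _ _ mu _ _ _ (EFin \o id)).
- exact: measurable_itv.
- apply/measurable_EFinP.
  rewrite (_ : (fun x => x * ind a c x) = id \* \1_(`[a, c[ : set R)).
    by apply: measurable_funM; [exact: measurable_id | exact: measurable_indic].
  by apply/funext => x; rewrite /= indE.
- move=> x _; rewrite /= lee_fin normrM ler_piMr // /ind.
  by case: ifP; rewrite ?normr1 ?normr0.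
- exact: integrable_id_itv.
Qed.

Lemma integrable_scaled_id_ind (r a c : R) :
  mu.-integrable (@I01 R) (EFin \o (fun x => r * (x * ind a c x))).
Proof.
have mI : measurable (@I01 R) by exact: measurable_itv.
have := integrableZl _ r (integrable_id_ind a c).
by move=> /(_ (measurable_itv _)); apply: eq_integrable.
Qed.

Lemma Rintegral_id_ind (a c : R) : 0 <= a -> a < c -> c <= 1 ->
  Rintegral mu (@I01 R) (fun x => x * ind a c x) = (c ^+ 2 - a ^+ 2) / 2.
Proof.
move=> a0 ac c1.
transitivity (Rintegral mu (@I01 R `&` `[a, c[) id).
  rewrite Rintegral_mkcondr; apply: eq_Rintegral => x _.
  by rewrite /patch indE indicE; case: (x \in _); rewrite ?mulr1 ?mulr0.
rewrite setIidr; last first.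
  move=> x /=; rewrite !in_itv /= => /andP[ax xc].
  apply/andP; split; [exact: le_trans ax | exact: le_trans (ltW xc) c1].
rewrite Rintegral_itv_bndo_bndc; first by rewrite /Rintegral integral_id_itv.
by apply: integrableS (integrable_id_itv a c) => //; exact: subset_itv_co_cc.
Qed.

End integral_id_indicator.

Lemma nneseries_not_lty_of_ge (R : realType) (u : nat -> R) (C : R) :
  0 < C -> (forall j, 0 <= u j) -> (forall j, C <= u j.+1) ->
  ~ (\sum_(0 <= j <oo) (u j)%:E < +oo)%E.
Proof.
move=> C0 u0 uC /(nnseries_is_cvg u0)/cvg_series_cvg_0 u_to0.
have [N _ uN] := cvgr0_norm_lt _ u_to0 _ C0.
by have := uN N.+1 (leqnSn N); rewrite /= ger0_norm // ltNge uC.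
Qed.

Lemma gt0_powRD (R : realType) (x r s : R) : 0 < x -> x `^ (r + s) = x `^ r * x `^ s.
Proof. by move=> x0; rewrite powRD // (gt_eqF x0) implybT. Qed.

Lemma level_term_ge0 (R : realType) (b : nat) (p : \bar R) (q : R) (f : R -> R)
    (j : nat) : 0 <= level_term b p q f j.
Proof. by rewrite /level_term; case: p => [r||]; exact: powR_ge0. Qed.

Lemma level_term_ge (R : realType) (b : nat) (p : \bar R) (q w : R)
    (f : R -> R) (j : nat) :
  (0 < b)%N -> (1 <= p)%E -> 0 <= q -> 0 <= w ->
  (forall k, (k < nDelta b j)%N -> w <= `|wcoef b j 0 k f|) ->
  (nDelta b j)%:R `^ (q * invp p) * w `^ q <= level_term b p q f j.
Proof.
move=> b0 p1 q0 w0 wf.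
have Delta_gt0 : (0 < nDelta b j)%N by case: (j) => //= i; rewrite expn_gt0 b0.
have Nabla_gt0 : (0 < nNabla b j)%N by case: (j).
case: p p1 => [r||] // p1 /=.
- have r0 : 0 < r by rewrite (lt_le_trans ltr01) -?lee_fin.
  have inner k : (k < nDelta b j)%N ->
      w `^ r <= \sum_(i < nNabla b j) `|wcoef b j i k f| `^ r.
    move=> kD; rewrite (bigD1 (Ordinal Nabla_gt0)) //= -[leLHS]addr0 lerD //.
      by rewrite ge0_ler_powR ?(ltW r0) ?nnegrE // wf.
    by rewrite sumr_ge0 // => i _; exact: powR_ge0.
  have outer : (nDelta b j)%:R * w `^ r
      <= \sum_(k < nDelta b j) \sum_(i < nNabla b j) `|wcoef b j i k f| `^ r.
    rewrite mulr_natl -[in leLHS](card_ord (nDelta b j)) -sumr_const.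
    by apply: ler_sum => k _; exact: inner.
  apply: le_trans (ge0_ler_powR _ _ _ outer); last 3 first.
  + by rewrite divr_ge0 // ltW.
  + by rewrite nnegrE mulr_ge0 // powR_ge0.
  + by rewrite nnegrE (le_trans _ outer) // mulr_ge0 // powR_ge0.
  rewrite powRM ?powR_ge0 // -powRrM mulrCA divff ?gt_eqF // mulr1.
  by rewrite mulrC.
- pose k0 := Ordinal Delta_gt0; pose i0 := Ordinal Nabla_gt0.
  have w_le_max : w <= \big[Num.max/0]_(k < nDelta b j)
                         \big[Num.max/0]_(i < nNabla b j) `|wcoef b j i k f|.
    apply: le_trans (wf 0%N Delta_gt0) (le_trans _ (le_bigmax _ _ k0)).
    exact: (le_bigmax _ (fun i : 'I_(nNabla b j) => `|wcoef b j i k0 f|) i0).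
  rewrite mulr0 powRr0 mul1r ge0_ler_powR ?nnegrE //.
  exact: le_trans w_le_max.
Qed.

Section haar_coefficients_of_id.
Variables (R : realType) (b : nat).
Hypothesis b2 : (2 <= b)%N.

Let B : R := b%:R.
Let B_gt0 : 0 < B. Proof. by rewrite ltr0n ltnW. Qed.
Let B_ge1 : 1 <= B. Proof. by rewrite ler1n ltnW. Qed.

Lemma wcoef_id (j k : nat) : (k < b ^ j)%N ->
  wcoef b j.+1 0 k (fun x : R => x) = - ((B - 1) / 2 * B `^ (- (3 / 2) * j.+1%:R)).
Proof.
move=> kb; rewrite /wcoef /haar -/B.
set P := B `^ (j.+1%:R / 2 - 1); set h := B `^ (- j.+1%:R).
have h_gt0 : 0 < h by exact: powR_gt0.
have -> : B `^ (1 - j.+1%:R) = B * h by rewrite gt0_powRD // powRr1 // ltW.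
have Bhk : B * h * (k%:R + 1) <= 1.
  rewrite /h powR_invn ?(ltW B_gt0) // exprS invfM mulrA divff ?gt_eqF // mul1r.
  by rewrite mulrC ler_pdivrMr ?exprn_gt0 // mul1r /B -natrX natr1 ler_nat.
have -> : (fun x => x * (P * (B * ind (h * (B * k%:R + 0%:R)) (h * (B * k%:R + 0%:R + 1)) x
                              - ind (B * h * k%:R) (B * h * (k%:R + 1)) x)))
        = (fun x => P * B * (x * ind (h * (B * k%:R)) (h * (B * k%:R + 1)) x)
                    - P * (x * ind (B * h * k%:R) (B * h * (k%:R + 1)) x)).
  by apply/funext => x; rewrite addr0; ring.
have mI : measurable (@I01 R) by exact: measurable_itv.
rewrite RintegralB //; try exact: integrable_scaled_id_ind.
rewrite !RintegralZl //; try exact: integrable_id_ind.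
have <- : P * B * h ^+ 2 = B `^ (- (3 / 2) * j.+1%:R).
  rewrite /P /h expr2 -[X in _ * X * _](powRr1 (ltW B_gt0)) -!gt0_powRD //.
  by congr (_ `^ _); field.
rewrite !Rintegral_id_ind //; first by ring.
- by rewrite !mulr_ge0 // ltW.
- by rewrite ltr_pM2l ?mulr_gt0 // ltrDl.
- by rewrite !mulr_ge0 // ltW.
- by rewrite ltr_pM2l // ltrDl.
- apply: le_trans Bhk; rewrite [B * h]mulrC -mulrA ler_pM2l // mulrDr mulr1.
  by rewrite lerD2l.
Qed.

Lemma weighted_level_term_id_ge (p : \bar R) (q alpha : R) (j : nat) :
  (1 <= p)%E -> 0 <= q -> 1 <= alpha ->
  ((B - 1) / 2) `^ q * B `^ (- (q * invp p)) <=
  B `^ (q * (alpha - invp p + 2^-1) * j.+1%:R) * level_term b p q id j.+1.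
Proof.
move=> p1 q0 alpha1; set s := invp p.
have u0 : 0 <= (B - 1) / 2 by rewrite divr_ge0 // subr_ge0.
set w := (B - 1) / 2 * B `^ (- (3 / 2) * j.+1%:R).
have w0 : 0 <= w by rewrite mulr_ge0 // powR_ge0.
have wcoef_ge k : (k < nDelta b j.+1)%N -> w <= `|wcoef b j.+1 0 k id|.
  by move=> kb; rewrite wcoef_id // normrN ger0_norm.
have := level_term_ge (ltnW b2) p1 q0 w0 wcoef_ge.
move=> /(ler_wpM2l (powR_ge0 B (q * (alpha - s + 2^-1) * j.+1%:R))); apply: le_trans.
rewrite /= natrX -/B -powR_mulrn ?(ltW B_gt0) // -powRrM.
rewrite -/s /w [in leRHS]powRM ?powR_ge0 // -powRrM.
have -> : B `^ (q * (alpha - s + 2^-1) * j.+1%:R) *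
    (B `^ (j%:R * (q * s)) * (((B - 1) / 2) `^ q * B `^ (- (3 / 2) * j.+1%:R * q)))
  = ((B - 1) / 2) `^ q * B `^ (- (q * s) + q * (alpha - 1) * j.+1%:R).
  have -> : B `^ (- (q * s) + q * (alpha - 1) * j.+1%:R) =
      B `^ (q * (alpha - s + 2^-1) * j.+1%:R) * B `^ (j%:R * (q * s))
      * B `^ (- (3 / 2) * j.+1%:R * q).
    by rewrite -!gt0_powRD //; congr (_ `^ _); rewrite -[j.+1%:R]natr1; field.
  by ring.
rewrite ler_wpM2l ?powR_ge0 // ler_powR // lerDl.
by rewrite !mulr_ge0 // subr_ge0.
Qed.

End haar_coefficients_of_id.

Lemma inLp01_cst1 (R : realType) (p : \bar R) : (1 <= p)%E -> inLp01 p (cst 1).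
Proof.
move=> p1; split; first exact: measurable_cst.
rewrite unlock; case: p p1 => [r||] //= p1.
- apply: poweR_lty; rewrite (_ : (fun x => _) = fun x => (\1_(@I01 R) x)%:E).
    rewrite integral_indic ?setIT //=; last exact: measurable_itv.
    by rewrite lebesgue_measure_itv /= lte_fin ltr01 ltry.
  apply/funext => x; rewrite indicE /=.
  case: (x \in _); rewrite ?normr1 ?normr0 ?powR1 ?powR0 // gt_eqF //.
  by rewrite (lt_le_trans ltr01) -?lee_fin.
- case: ifP => _ //; apply: le_lt_trans (ltey 1%E).
  apply/ess_sup_inf.ess_supP; apply: aeW => x /=.
  by rewrite lee_fin; case: ifP => _; rewrite ?normr1 ?normr0.
Qed.

Lemma H1p_id (R : realType) (p : \bar R) : (1 <= p)%E -> H1p p (fun x : R => x).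
Proof.
move=> p1; exists 0, (cst 1); split; first exact: inLp01_cst1.
move=> x; rewrite /I01 inE /= in_itv /= => /andP[x0 x1].
rewrite Rintegral_cst ?mul1r ?add0r; last exact: measurable_itv.
change (x = fine (mu ([set` `[0, x]] : set R))).
rewrite lebesgue_measure_itv /= lte_fin; case: ltrP => [_|x_le0] /=; first by rewrite subr0.
by apply/eqP; rewrite eq_le x0 x_le0.
Qed.

Theorem proposition1 (R : realType) (b : nat) (p : \bar R) (q : R) :
  (2 <= b)%N -> (1 <= p)%E -> 1 <= q ->
  H1p p (fun x : R => x) /\
  (forall alpha : R, 1 <= alpha -> ~ Hwav b alpha p q (fun x : R => x)) /\
  (forall alpha : R, 1 <= alpha ->
     ~ (forall f : R -> R, H1p p f -> Hwav b alpha p q f)).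
Proof.
move=> b2 p1 q1; have q0 : 0 <= q := le_trans ler01 q1.
have not_Hwav_id alpha : 1 <= alpha -> ~ Hwav b alpha p q (fun x : R => x).
  move=> alpha1 [_]; apply: (nneseries_not_lty_of_ge _ _
    (fun j => weighted_level_term_id_ge b2 j p1 q0 alpha1)).
  - have u_gt0 : 0 < (b%:R - 1) / 2 :> R by rewrite divr_gt0 // subr_gt0 ltr1n.
    by rewrite mulr_gt0 ?powR_gt0 // ltr0n ltnW.
  - by move=> j; rewrite mulr_ge0 ?powR_ge0 ?level_term_ge0.
split; first exact: H1p_id.
by split=> // alpha alpha1 H1p_Hwav; exact/(not_Hwav_id alpha alpha1)/H1p_Hwav/H1p_id.
Qed.
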